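(* Let $n\ge2$, let $M$ be a nonderogatory $d\times d$ matrix with minimal polynomial $\mathbf p$, and let $\mathcal B$ be a generic maximal subalgebra of $\mathcal T_{n,d}[\mathcal P(M)]$. For $B\in\mathcal B$ write $B_j=\mathbf b_j(M)$ with $\mathbf b_j\in\mathbb C[X]$. Then: (i) for each $j\in\{\pm1,\dots,\pm(n-1)\}$ there exists $B\in\mathcal B$ with $B_j\neq0$; (ii) letting $\mathbf s_j$ be the (monic) greatest common divisor of $\mathbf p$ and all the $\mathbf b_j$, $B\in\mathcal B$, we have $\mathbf s_1=\dots=\mathbf s_{n-1}=:\mathbf s_+$ and $\mathbf s_{-1}=\dots=\mathbf s_{-(n-1)}=:\mathbf s_-$; consequently every $B\in\mathcal B$ can be written as $B_j=\mathbf s_+(M)\tilde{\mathbf b}_j(M)$ for $j\ge1$ and $B_j=\mathbf s_-(M)\tilde{\mathbf b}_j(M)$ for $j\le-1$, with $\tilde{\mathbf b}_j\in\mathbb C[X]$; (iii) there exists $A\in\mathcal B$ for which the polynomials $\tilde{\mathbf a}_j$ in (ii) can be chosen relatively prime to $\mathbf p$ for every $j=\pm1,\dots,\pm(n-1)$; (iv) $\mathbf s_+\mathbf s_-$ divides $\mathbf p$.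
   Context: A nonderogatory matrix is one whose minimal polynomial equals its characteristic polynomial; $\mathcal P(M)$ is the algebra of polynomials in $M$. $\mathcal T_{n,d}[\mathcal P(M)]$ is the set of $n\times n$ block Toeplitz matrices $(B_{i-j})_{i,j=0}^{n-1}$ with all $B_m\in\mathcal P(M)$. A maximal subalgebra of $\mathcal T_{n,d}[\mathcal P(M)]$ is a subalgebra (linear subspace closed under multiplication) contained in it and maximal under inclusion among such. Let $\mathfrak B_u$ be the set of $B\in\mathcal T_{n,d}[\mathcal P(M)]$ with $B_i=0$ for all $i\ge1$ (upper triangular) and $\mathfrak B_l$ the set with $B_i=0$ for all $i\le-1$ (lower triangular). An algebra is called generic if it is contained neither in $\mathfrak B_u$ nor in $\mathfrak B_l$. *)

From HB Require Import structures.
From mathcomp Require Import all_boot all_order all_algebra.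
Set Implicit Arguments. Unset Strict Implicit. Unset Printing Implicit Defensive.
Import Order.TTheory GRing.Theory Num.Theory.
Local Open Scope ring_scope.

Section BlockToeplitz.
Variables (C : fieldType) (d' n : nat).
Local Notation d := d'.+1.
Local Notation BM := 'M['M[C]_d]_n.

Definition nonderogatory (M : 'M[C]_d) : Prop := mxminpoly M = char_poly M.

Definition inPM (M : 'M[C]_d) (X : 'M[C]_d) : Prop :=
  exists q : {poly C}, X = horner_mx M q.

Definition toeplitzPM (M : 'M[C]_d) (B : BM) : Prop :=
  exists b : int -> 'M[C]_d, (forall m, inPM M (b m)) /\
    forall i j : 'I_n, B i j = b ((nat_of_ord i)%:Z - (nat_of_ord j)%:Z).

(* the block B_m, i.e. the (i,j) block of B for some i,j with i - j = m
   (0 if there is no such pair) *)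
Definition tblock (B : BM) (m : int) : 'M[C]_d :=
  if [pick ij : 'I_n * 'I_n | (nat_of_ord ij.1)%:Z - (nat_of_ord ij.2)%:Z == m]
  is Some ij then B ij.1 ij.2 else 0.

Definition bscale (c : C) (B : BM) : BM := map_mx (fun X => c *: X) B.

Definition subalgebra (S : BM -> Prop) : Prop :=
  [/\ S 0,
      (forall A B, S A -> S B -> S (A + B)),
      (forall c A, S A -> S (bscale c A)) &
      (forall A B, S A -> S B -> S (A *m B))].

Definition maximal_subalgebra (M : 'M[C]_d) (S : BM -> Prop) : Prop :=
  [/\ subalgebra S,
      (forall B, S B -> toeplitzPM M B) &
      (forall S' : BM -> Prop, subalgebra S' -> (forall B, S' B -> toeplitzPM M B) ->
         (forall B, S B -> S' B) -> forall B, S' B -> S B)].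

Definition upperB (B : BM) : Prop := forall i : int, 1 <= i -> tblock B i = 0.
Definition lowerB (B : BM) : Prop := forall i : int, i <= -1 -> tblock B i = 0.

Definition generic (S : BM -> Prop) : Prop :=
  ~ (forall B, S B -> upperB B) /\ ~ (forall B, S B -> lowerB B).

Definition is_sgcd (M : 'M[C]_d) (S : BM -> Prop) (j : int) (s : {poly C}) : Prop :=
  [/\ s \is monic, s %| mxminpoly M,
      (forall B b, S B -> horner_mx M b = tblock B j -> s %| b) &
      (forall t : {poly C}, t %| mxminpoly M ->
         (forall B b, S B -> horner_mx M b = tblock B j -> t %| b) -> t %| s)].

End BlockToeplitz.

(* The blocks of every matrix of [S] are polynomials in [M], so they commute, and
   for block Toeplitz [A], [B] the product [A B] is block Toeplitz exactly when
   [A_k B_(l-n) = A_(k-n) B_l] for [0 < k, l < n].  Let [s_+] and [s_-] be the monic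
   generators of the ideals spanned by the polynomials of the positive-index and
   of the negative-index blocks of [S] (both contain the minimal polynomial [p]),
   and [s] the monic gcd of [s_-] and [p / s_+].  Writing [s_+] as a combination of
   positive blocks, the identity gives [a] with [s_+(M) B_(l-n) = (s a)(M) B_l] for
   all [B] in [S]; writing [s_-] as a combination of negative blocks and feeding
   them into this relation shows that [a] is coprime to [p / (s_+ s)], so we may
   replace [a] by some [a + c p / (s_+ s)], coprime to [p], without breaking the
   relation.  The block Toeplitz matrices over [P(M)] whose positive blocks are
   multiples of [s_+(M)] and which satisfy the relation form a subalgebra
   containing [S], hence equal to [S] by maximality.  So [S] contains the matrix
   with [s_+(M)] below and [(s a)(M)] above the diagonal, which realises both gcds
   (thus [s = s_-]) and, [S] being generic, has no zero block off the diagonal. *)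

From HB Require Import structures.
From mathcomp Require Import all_boot all_order all_algebra.
From mathcomp Require Import zify ring.
From Stdlib Require Import Classical.
Import Order.TTheory GRing.Theory Num.Theory.
Local Open Scope ring_scope.
Set Implicit Arguments. Unset Strict Implicit. Unset Printing Implicit Defensive.

Section PolyIdeal.
Variable F : fieldType.

Definition poly_ideal (I : {poly F} -> Prop) :=
  [/\ I 0, (forall x y, I x -> I y -> I (x + y)) & (forall q x, I x -> I (q * x))].

Definition ideal_span (G : {poly F} -> Prop) (c : {poly F}) :=
  exists2 s : seq ({poly F} * {poly F}),
    (forall x, x \in s -> G x.2) & c = \sum_(x <- s) x.1 * x.2.

Lemma ideal_span_ideal G : poly_ideal (ideal_span G).
Proof.
split; first by exists [::]; rewrite ?big_nil.
  move=> _ _ [s Gs ->] [t Gt ->]; rewrite -big_cat; exists (s ++ t) => // z.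
  by rewrite mem_cat => /orP[zs | zt]; [apply: Gs | apply: Gt].
move=> q _ [s Gs ->]; rewrite mulr_sumr.
exists [seq (q * z.1, z.2) | z <- s]; first by move=> _ /mapP[z zs ->]; apply: (Gs z zs).
by rewrite big_map; apply: eq_bigr => z _; rewrite mulrA.
Qed.

Lemma ideal_span_sub G c : G c -> ideal_span G c.
Proof.
move=> Gc; exists [:: (1, c)]; last by rewrite big_seq1 mul1r.
by move=> x; rewrite inE => /eqP ->.
Qed.

Lemma ideal_span_min G I : poly_ideal I -> (forall c, G c -> I c) ->
  forall c, ideal_span G c -> I c.
Proof.
move=> [I0 ID IM] GI _ [s Gs ->]; elim: s Gs => [|[q c] s IHs] Gs.
  by rewrite big_nil.
rewrite big_cons; apply: ID; first by apply/IM/GI/(Gs (q, c)); rewrite inE eqxx.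
by apply: IHs => x xs; apply: Gs; rewrite inE xs orbT.
Qed.

(* A nonzero element of minimal size generates the ideal. *)
Lemma poly_ideal_monic_generator I p : poly_ideal I -> I p -> p != 0 ->
  exists s, [/\ s \is monic, I s & forall x, I x -> s %| x].
Proof.
move=> [_ ID IM]; have [N le_p_N] : exists N, (size p <= N)%N by exists (size p).
elim: N p le_p_N => [|N IHN] c le_c_N Ic c0.
  by move: le_c_N; rewrite leqn0 size_poly_eq0 (negbTE c0).
have lc0 : (lead_coef c)^-1 != 0 by rewrite invr_eq0 lead_coef_eq0.
have [[x Ix c_ndvd] | c_dvd] := classic (exists2 x, I x & ~~ (c %| x)).
  apply: (IHN (x %% c)).
  - by rewrite -ltnS (leq_trans _ le_c_N) // ltn_modp.
  - have -> : x %% c = x + (- (x %/ c)) * c by rewrite {2}(divp_eq x c); ring.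
    by apply: ID => //; apply: IM.
  - by apply: contra c_ndvd => /eqP/modp_eq0P.
exists ((lead_coef c)^-1 *: c); split.
- by rewrite monicE lead_coefZ mulVf ?lead_coef_eq0.
- by rewrite -mul_polyC; apply: IM.
- move=> x Ix; rewrite dvdpZl //; apply: contraT => c_ndvd.
  by case: c_dvd; exists x.
Qed.

Lemma ideal_span_monic_generator G p : G p -> p != 0 ->
  exists s, [/\ s \is monic, ideal_span G s & forall c, G c -> s %| c].
Proof.
move=> Gp p0; have [s [s_monic span_s s_dvd]] :=
  poly_ideal_monic_generator (ideal_span_ideal G) (ideal_span_sub Gp) p0.
by exists s; split=> // c /ideal_span_sub; apply: s_dvd.
Qed.

End PolyIdeal.

Lemma monic_gcdp_coprime_div (F : fieldType) (u v : {poly F}) : u != 0 ->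
  exists g, [/\ g \is monic, g %| u, g %| v & coprimep (u %/ g) (v %/ g)].
Proof.
move=> u0; have gcd0 : gcdp u v != 0 by rewrite gcdp_eq0 negb_and u0.
have lc0 : lead_coef (gcdp u v) != 0 by rewrite lead_coef_eq0.
exists ((lead_coef (gcdp u v))^-1 *: gcdp u v); split.
- by rewrite monicE lead_coefZ mulVf ?lead_coef_eq0.
- by rewrite dvdpZl ?dvdp_gcdl ?invr_eq0.
- by rewrite dvdpZl ?dvdp_gcdr ?invr_eq0.
- rewrite !divpZr ?invr_eq0 // coprimepZl ?coprimepZr ?invr_eq0 //.
  by apply: coprimep_div_gcd; rewrite u0.
Qed.

Lemma coprimep_of_dvdp_subr (F : fieldType) (e g a b : {poly F}) :
  coprimep e g -> g %| e - a * b -> coprimep a g.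
Proof.
move=> cop_eg /dvdpP[q Eq]; move: cop_eg.
have -> : e = q * g + a * b by rewrite -Eq; ring.
by rewrite coprimep_sym coprimep_addl_mul coprimep_sym coprimepMl => /andP[].
Qed.

Lemma exists_notin (R : numDomainType) (s : seq R) : exists c : R, c \notin s.
Proof.
set N := \sum_(b <- s) `|b|; have N_ge0 : 0 <= N by rewrite sumr_ge0.
exists (1 + N); apply/negP => cs.
have : `|1 + N| <= N by rewrite [leRHS](big_rem _ cs) /= lerDl sumr_ge0.
by rewrite ger0_norm ?addr_ge0 // gerDr ler10.
Qed.

(* Only the finitely many values [c = - a(z) / g(z)], [z] a root of [p], are
   excluded. *)
Lemma exists_coprimep_addr (C : numClosedFieldType) (a g p : {poly C}) :
  p != 0 -> coprimep a g -> exists c : C, coprimep (a + c%:P * g) p.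
Proof.
move=> p0 cop_ag; have [rs Ep] := closed_field_poly_normal p.
have [c cNbad] := exists_notin [seq - a.[z] / g.[z] | z <- rs].
exists c; apply: contraT; rewrite coprimep_def => /closed_rootP[z].
rewrite root_gcd => /andP[/eqP az_cgz pz]; rewrite !hornerE in az_cgz.
have zrs : z \in rs.
  by move: pz; rewrite Ep rootZ ?lead_coef_eq0 // root_prod_XsubC.
have gz0 : g.[z] != 0.
  apply/eqP => gz0; move: az_cgz; rewrite gz0 mulr0 addr0 => az0.
  by have := coprimep_root (x := z) cop_ag; rewrite /root az0 gz0 eqxx => /(_ isT).
suff : c \in [seq - a.[z] / g.[z] | z <- rs] by rewrite (negbTE cNbad).
apply/mapP; exists z => //.
have -> : - a.[z] = c * g.[z] by apply/eqP; rewrite -subr_eq0 -opprD az_cgz oppr0.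
by rewrite mulfK.
Qed.

Section ToeplitzProduct.
Variables (R : pzRingType) (n' : nat).
Local Notation n := n'.+1.

Definition is_toeplitz (X : 'M[R]_n) (x : int -> R) :=
  forall i j : 'I_n, X i j = x (i%:Z - j%:Z).

Definition tconv (a b : int -> R) (i j : int) :=
  \sum_(t < n) a (i - t%:Z) * b (t%:Z - j).

(* The symbol of a product is read off its first column and first row. *)
Definition tconv_symbol (a b : int -> R) (m : int) :=
  if 0 <= m then tconv a b m 0 else tconv a b 0 (- m).

Definition toeplitz_compatible (a b : int -> R) :=
  forall k l : nat, (0 < k < n)%N -> (0 < l < n)%N ->
    a k%:Z * b (l%:Z - n%:Z) = a (k%:Z - n%:Z) * b l%:Z.

Definition offdiag_mx (u v : R) : 'M[R]_n :=
  \matrix_(i, j) (if (j < i)%N then u else if (i < j)%N then v else 0).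

Lemma offdiag_mx_toeplitz u v :
  is_toeplitz (offdiag_mx u v) (fun m => if 0 < m then u else if m < 0 then v else 0).
Proof.
move=> i j; rewrite mxE; case: ltngtP => ij.
- by rewrite ifT //; lia.
- by rewrite ifF ?ifT //; lia.
- by rewrite !ifF //; lia.
Qed.

Lemma mulmx_tconv A B a b : is_toeplitz A a -> is_toeplitz B b ->
  forall i j : 'I_n, (A *m B) i j = tconv a b i j.
Proof. by move=> Aa Bb i j; rewrite mxE; apply: eq_bigr => t _; rewrite Aa Bb. Qed.

Lemma tconvS a b i j :
  tconv a b (i + 1) (j + 1) + a (i - n'%:Z) * b (n'%:Z - j) =
  tconv a b i j + a (i + 1) * b (- j - 1).
Proof.
rewrite /tconv big_ord_recl big_ord_recr /= [RHS]addrC addrA.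
congr (_ + _ + _); first by congr (a _ * b _); lia.
by apply: eq_bigr => t _; rewrite /bump /=; congr (a _ * b _); lia.
Qed.

Lemma tconv_diag a b : toeplitz_compatible a b ->
  forall m i j : nat, (i + m < n)%N -> (j + m < n)%N ->
  tconv a b (i + m)%N (j + m)%N = tconv a b i j.
Proof.
move=> ab; elim=> [|m IHm] i j im_lt jm_lt; first by rewrite !addn0.
rewrite -(IHm i j); [|lia|lia].
set I := (i + m)%N%:Z; set J := (j + m)%N%:Z.
have -> : (i + m.+1)%N%:Z = I + 1 by rewrite /I; lia.
have -> : (j + m.+1)%N%:Z = J + 1 by rewrite /J; lia.
apply: (addIr (a (I - n'%:Z) * b (n'%:Z - J))); rewrite tconvS; congr (_ + _).
have := ab (i + m).+1 (n' - (j + m))%N; rewrite /I /J.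
have -> : (i + m).+1%:Z = (i + m)%N%:Z + 1 by lia.
have -> : (n' - (j + m))%N%:Z - n%:Z = - (j + m)%N%:Z - 1 by lia.
have -> : (i + m)%N%:Z + 1 - n%:Z = (i + m)%N%:Z - n'%:Z by lia.
have -> : (n' - (j + m))%N%:Z = n'%:Z - (j + m)%N%:Z by lia.
by apply; apply/andP; split; lia.
Qed.

Lemma mulmx_toeplitz A B a b : is_toeplitz A a -> is_toeplitz B b ->
  toeplitz_compatible a b -> is_toeplitz (A *m B) (tconv_symbol a b).
Proof.
move=> Aa Bb ab i j; have := ltn_ord i; have := ltn_ord j.
rewrite (mulmx_tconv Aa Bb) /tconv_symbol; case: (leqP j i) => [ji|ij] jn i_n.
  have := tconv_diag ab (m := j) (i := (i - j)%N) (j := 0) ltac:(lia) ltac:(lia).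
  rewrite add0n subnK // => ->; case: ifP => h; last lia.
  by congr tconv; lia.
have := tconv_diag ab (m := i) (i := 0) (j := (j - i)%N) ltac:(lia) ltac:(lia).
rewrite add0n subnK 1?ltnW // => ->; case: ifP => h; first lia.
by congr tconv; lia.
Qed.

Lemma toeplitz_compatible_mulmx A B a b c : is_toeplitz A a -> is_toeplitz B b ->
  is_toeplitz (A *m B) c -> toeplitz_compatible a b.
Proof.
move=> Aa Bb ABc k l /andP[k_gt0 k_lt] /andP[l_gt0 l_lt].
have tconvE (x y : nat) : (x < n)%N -> (y < n)%N -> tconv a b x y = c (x%:Z - y%:Z).
  move=> x_lt y_lt; have := ABc (Ordinal x_lt) (Ordinal y_lt).
  by rewrite (mulmx_tconv Aa Bb).
have := tconvS a b k.-1 (n' - l)%N.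
have -> : k.-1%:Z + 1 = k by lia.
have -> : (n' - l)%N%:Z + 1 = (n' - l).+1 by lia.
rewrite !tconvE; [|lia|lia|lia|lia].
have -> : k%:Z - (n' - l).+1%:Z = k.-1%:Z - (n' - l)%N%:Z by lia.
move/addrI; have -> : k.-1%:Z - n'%:Z = k%:Z - n%:Z by lia.
have -> : n'%:Z - (n' - l)%N%:Z = l by lia.
by have -> : - (n' - l)%N%:Z - 1 = l%:Z - n%:Z by lia.
Qed.

Definition twisted_shift (u v : R) : 'M[R]_n :=
  \matrix_(i, j) ((if nat_of_ord i == j.+1 then u else 0) +
                  (if (nat_of_ord i == 0%N) && (nat_of_ord j == n') then v else 0)).

Lemma mulmx_twisted_shift X x u v : is_toeplitz X x -> forall i j : 'I_n,
  (X *m twisted_shift u v) i j =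
    (if (j.+1 < n)%N then x (i%:Z - j.+1%:Z) * u else 0) +
    (if nat_of_ord j == n' then x i%:Z * v else 0).
Proof.
move=> Xx i j; rewrite mxE; under eq_bigr do rewrite mxE Xx mulrDr.
rewrite big_split /=; congr (_ + _).
  under eq_bigr do rewrite (fun_if (fun y => x _ * y)) mulr0.
  by rewrite -big_mkcond (big_ord1_eq _ (fun t => x (i%:Z - t%:Z) * u)).
case: eqP => [_|_]; last by apply: big1 => t _; rewrite andbF mulr0.
under eq_bigr do rewrite andbT (fun_if (fun y => x _ * y)) mulr0.
by rewrite -big_mkcond (big_ord1_eq _ (fun t => x (i%:Z - t%:Z) * v)) subr0.
Qed.

Lemma twisted_shift_mulmx X x u v : is_toeplitz X x -> forall i j : 'I_n,
  (twisted_shift u v *m X) i j =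
    (if (0 < i)%N then u * x (i.-1%:Z - j%:Z) else 0) +
    (if nat_of_ord i == 0%N then v * x (n'%:Z - j%:Z) else 0).
Proof.
move=> Xx i j; rewrite mxE; under eq_bigr do rewrite mxE Xx mulrDl.
rewrite big_split /=; congr (_ + _).
  under eq_bigr do rewrite (fun_if (fun y => y * x _)) mul0r eq_sym.
  rewrite -big_mkcond; case: (posnP i) => [i0 | i_gt0].
    by rewrite i0; apply: big_pred0 => t.
  under eq_bigl do rewrite -(prednK i_gt0) eqSS.
  by rewrite (big_ord1_eq _ (fun t => u * x (t%:Z - j%:Z))) (leq_ltn_trans (leq_pred _)).
case: eqP => [_|_] /=; last by apply: big1 => t _; rewrite mul0r.
under eq_bigr do rewrite (fun_if (fun y => y * x _)) mul0r.
by rewrite -big_mkcond (big_ord1_eq _ (fun t => v * x (t%:Z - j%:Z)) n' n) ltnSn.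
Qed.

Lemma twisted_shift_commute X x u v : is_toeplitz X x ->
  (forall m, GRing.comm (x m) u) -> (forall m, GRing.comm (x m) v) ->
  X *m twisted_shift u v = twisted_shift u v *m X <->
  (forall k : nat, (0 < k < n)%N -> u * x (k%:Z - n%:Z) = v * x k%:Z).
Proof.
move=> Xx xu xv; split=> [XY k /andP[k_gt0 k_lt] | uv].
  move/matrixP: XY => /(_ (Ordinal k_lt) ord_max).
  rewrite (mulmx_twisted_shift _ _ Xx) (twisted_shift_mulmx _ _ Xx) /= ltnn eqxx.
  rewrite k_gt0 gtn_eqF // add0r addr0 xv => ->.
  by congr (_ * x _); lia.
apply/matrixP => i j; rewrite (mulmx_twisted_shift _ _ Xx) (twisted_shift_mulmx _ _ Xx).
have := ltn_ord i; have := ltn_ord j.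
case: eqVneq => [j_eq | j_neq]; case: posnP => [i0 | i_gt0] j_lt i_lt /=.
- rewrite i0 j_eq ltnn !add0r xv; congr (_ * x _); lia.
- rewrite j_eq ltnn add0r addr0 xv -uv; last lia.
  by congr (u * x _); lia.
- have -> : (nat_of_ord i)%:Z - j.+1%:Z = (n' - j)%N%:Z - n%:Z by lia.
  rewrite ifT ?addr0 ?add0r ?xu ?uv; try lia.
  by congr (v * x _); lia.
- rewrite !addr0 ifT; last lia.
  by rewrite xu; congr (u * x _); lia.
Qed.

End ToeplitzProduct.

Section BlockToeplitzPM.
Variables (C : fieldType) (d' n' : nat) (M : 'M[C]_d'.+1).
Local Notation d := d'.+1.
Local Notation n := n'.+1.
Local Notation BM := 'M['M[C]_d]_n.
Local Notation hM := (horner_mx M).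
Local Notation p := (mxminpoly M).

Lemma pos_index (j : int) : 1 <= j < n%:Z -> exists2 k : nat, (0 < k < n)%N & j = k%:Z.
Proof. by move=> j_range; exists (absz j); lia. Qed.

Lemma neg_index (j : int) : - n%:Z < j <= -1 ->
  exists2 k : nat, (0 < k < n)%N & j = k%:Z - n%:Z.
Proof. by move=> j_range; exists (absz (j + n%:Z)); lia. Qed.

Lemma abs_index (j : int) : 1 <= `|j| < n%:Z -> 1 <= j < n%:Z \/ - n%:Z < j <= -1.
Proof.
case: (lerP 0 j) => [j_ge0 | j_lt0]; [rewrite ger0_norm // | rewrite ltr0_norm //].
  by left.
by move=> /andP[j_le j_gt]; right; apply/andP; split; lia.
Qed.

Lemma tblock_out (B : BM) m : ~~ ((- n%:Z < m) && (m < n%:Z)) -> tblock B m = 0.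
Proof.
rewrite /tblock; case: pickP => [[i j] /= /eqP <- | //].
by have := ltn_ord i; have := ltn_ord j; lia.
Qed.

Lemma tblock0 m : tblock (0 : BM) m = 0.
Proof. by rewrite /tblock; case: pickP => // ij _; rewrite mxE. Qed.

Lemma tblockE (B : BM) b : is_toeplitz B b ->
  forall m, (- n%:Z < m) && (m < n%:Z) -> tblock B m = b m.
Proof.
move=> Bb m /andP[m_gt m_lt]; rewrite /tblock; case: pickP => [[i j] /= /eqP <- | none].
  exact: Bb.
case: m m_gt m_lt none => k m_gt m_lt none.
  have k_lt : (k < n)%N by lia.
  by have := none (Ordinal k_lt, ord0); rewrite /= subr0 eqxx.
have k_lt : (k.+1 < n)%N by rewrite NegzE in m_gt; lia.
by have := none (ord0, Ordinal k_lt); rewrite /= NegzE add0r eqxx.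
Qed.

Lemma tblock_pos (B : BM) b k : is_toeplitz B b -> (0 < k < n)%N -> tblock B k%:Z = b k.
Proof. by move=> Bb k_range; apply: (tblockE Bb); lia. Qed.

Lemma tblock_neg (B : BM) b k : is_toeplitz B b -> (0 < k < n)%N ->
  tblock B (k%:Z - n%:Z) = b (k%:Z - n%:Z).
Proof. by move=> Bb k_range; apply: (tblockE Bb); lia. Qed.

Lemma tblock_offdiag_pos (u v : 'M[C]_d) k : (0 < k < n)%N ->
  tblock (offdiag_mx n' u v) k%:Z = u.
Proof.
move=> k_range; rewrite (tblock_pos (@offdiag_mx_toeplitz _ n' u v) k_range).
by rewrite ifT //; lia.
Qed.

Lemma tblock_offdiag_neg (u v : 'M[C]_d) k : (0 < k < n)%N ->
  tblock (offdiag_mx n' u v) (k%:Z - n%:Z) = v.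
Proof.
move=> k_range; rewrite (tblock_neg (@offdiag_mx_toeplitz _ n' u v) k_range).
by rewrite ifF ?ifT //; lia.
Qed.

Lemma inPM0 : inPM M 0. Proof. by exists 0; rewrite rmorph0. Qed.

Lemma inPM_horner q : inPM M (hM q). Proof. by exists q. Qed.

Lemma inPMD X Y : inPM M X -> inPM M Y -> inPM M (X + Y).
Proof. by move=> [q ->] [r ->]; exists (q + r); rewrite rmorphD. Qed.

Lemma inPMM X Y : inPM M X -> inPM M Y -> inPM M (X * Y).
Proof. by move=> [q ->] [r ->]; exists (q * r); rewrite rmorphM. Qed.

Lemma inPMZ c X : inPM M X -> inPM M (c *: X).
Proof. by move=> [q ->]; exists (c *: q); rewrite linearZ. Qed.

Lemma inPM_sum I r (P : pred I) (F : I -> 'M[C]_d) :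
  (forall i, P i -> inPM M (F i)) -> inPM M (\sum_(i <- r | P i) F i).
Proof. by move=> PF; apply: big_ind => //; [exact: inPM0 | exact: inPMD]. Qed.

Lemma inPM_comm X Y : inPM M X -> inPM M Y -> GRing.comm X Y.
Proof. by move=> [q ->] [r ->]; apply: comm_horner_mx2. Qed.

Lemma toeplitzPM_tblock (B : BM) : toeplitzPM M B ->
  is_toeplitz B (tblock B) /\ forall m, inPM M (tblock B m).
Proof.
move=> [b [b_PM Bb]]; split=> [i j | m].
  by rewrite Bb (tblockE Bb) //; have := ltn_ord i; have := ltn_ord j; lia.
have [m_in | m_out] := boolP ((- n%:Z < m) && (m < n%:Z)).
  by rewrite (tblockE Bb).
by rewrite tblock_out //; apply: inPM0.
Qed.

Lemma bscale_mulmxl c (A B : BM) : bscale c A *m B = bscale c (A *m B).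
Proof.
apply/matrixP => i j; rewrite !mxE scaler_sumr.
by apply: eq_bigr => t _; rewrite mxE scalerAl.
Qed.

Lemma bscale_mulmxr c (A B : BM) : A *m bscale c B = bscale c (A *m B).
Proof.
apply/matrixP => i j; rewrite !mxE scaler_sumr.
by apply: eq_bigr => t _; rewrite mxE scalerAr.
Qed.

Lemma horner_mx_eqP a b : reflect (hM a = hM b) (p %| a - b).
Proof.
apply: (iffP (mxminpoly_minP _ _)); rewrite rmorphB; first by move/subr0_eq.
by move=> ab; apply/eqP; rewrite subr_eq0; apply/eqP; exact: ab.
Qed.

Definition dvdPM (s : {poly C}) (X : 'M[C]_d) := exists x, X = hM (s * x).

Lemma dvdPM_horner s a : s %| a -> dvdPM s (hM a).
Proof. by move=> s_dvd_a; exists (a %/ s); rewrite divpKC. Qed.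

Lemma dvdPMD s X Y : dvdPM s X -> dvdPM s Y -> dvdPM s (X + Y).
Proof. by move=> [x ->] [y ->]; exists (x + y); rewrite mulrDr rmorphD. Qed.

Lemma dvdPMZ s c X : dvdPM s X -> dvdPM s (c *: X).
Proof. by move=> [x ->]; exists (c *: x); rewrite -scalerAr linearZ. Qed.

Lemma dvdPM_sum s I r (P : pred I) (F : I -> 'M[C]_d) :
  (forall i, P i -> dvdPM s (F i)) -> dvdPM s (\sum_(i <- r | P i) F i).
Proof.
move=> PF; apply: big_ind => //; last exact: dvdPMD.
by exists 0; rewrite mulr0 rmorph0.
Qed.

Lemma dvdPM_mull s X Y : inPM M X -> dvdPM s Y -> dvdPM s (X * Y).
Proof. by move=> [q ->] [y ->]; exists (q * y); rewrite -rmorphM mulrCA. Qed.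

Lemma dvdPM_mulr s X Y : dvdPM s X -> inPM M Y -> dvdPM s (X * Y).
Proof.
move=> sX Y_PM; rewrite -(inPM_comm Y_PM); first exact: dvdPM_mull.
by case: sX => x ->; apply: inPM_horner.
Qed.

Lemma dvdp_of_dvdPM s b : s %| p -> dvdPM s (hM b) -> s %| b.
Proof.
move=> s_dvd_p [x /horner_mx_eqP p_dvd].
by rewrite -(subrK (s * x) b) dvdp_add ?dvdp_mulr // (dvdp_trans s_dvd_p).
Qed.

Lemma dvdPM_eq0 s X : p %| s -> dvdPM s X -> X = 0.
Proof. by move=> p_dvd_s [x ->]; apply/mxminpoly_minP; rewrite dvdp_mulr. Qed.

Lemma upperB_of_blocks (B : BM) :
  (forall k : nat, (0 < k < n)%N -> tblock B k%:Z = 0) -> upperB B.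
Proof.
move=> Bk0 m m_ge1; have [m_lt | m_ge] := ltP m n%:Z.
  have /pos_index[k k_range ->] : 1 <= m < n%:Z by rewrite m_ge1.
  exact: Bk0.
by rewrite tblock_out //; apply/negP => /andP[_]; rewrite ltNge m_ge.
Qed.

Lemma lowerB_of_blocks (B : BM) :
  (forall k : nat, (0 < k < n)%N -> tblock B (k%:Z - n%:Z) = 0) -> lowerB B.
Proof.
move=> Bk0 m m_le; have [m_gt | m_le'] := ltP (- n%:Z) m.
  have /neg_index[k k_range ->] : - n%:Z < m <= -1 by rewrite m_gt.
  exact: Bk0.
by rewrite tblock_out //; apply/negP => /andP[]; rewrite ltNge m_le'.
Qed.

(* Commuting with the twisted shift encodes [s(M) X_(k-n) = t(M) X_k]
   ([twisted_shift_commute]); the divisibility of the positive blocks by [s(M)]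
   is what makes the set closed under products ([twisted_alg_compatible]). *)
Definition twisted_alg (s t : {poly C}) (X : BM) :=
  [/\ toeplitzPM M X, forall k : nat, (0 < k < n)%N -> dvdPM s (tblock X k%:Z) &
      X *m twisted_shift n' (hM s) (hM t) = twisted_shift n' (hM s) (hM t) *m X].

Section TwistedAlgebra.
Variables s t : {poly C}.

Lemma twisted_algP X : toeplitzPM M X ->
  (forall k : nat, (0 < k < n)%N -> dvdPM s (tblock X k%:Z)) ->
  (forall k : nat, (0 < k < n)%N ->
     hM s * tblock X (k%:Z - n%:Z) = hM t * tblock X k%:Z) ->
  twisted_alg s t X.
Proof.
move=> XT X_dvd X_rel; split=> //; have [XX X_PM] := toeplitzPM_tblock XT.
by apply/(twisted_shift_commute XX) => // m; apply: inPM_comm (X_PM m) (inPM_horner _).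
Qed.

Lemma twisted_alg_rel X : twisted_alg s t X -> forall k : nat, (0 < k < n)%N ->
  hM s * tblock X (k%:Z - n%:Z) = hM t * tblock X k%:Z.
Proof.
move=> [/toeplitzPM_tblock[XX X_PM] _ XY].
by apply/(twisted_shift_commute XX) => // m; apply: inPM_comm (X_PM m) (inPM_horner _).
Qed.

Lemma twisted_alg_compatible A B : twisted_alg s t A -> twisted_alg s t B ->
  toeplitz_compatible n' (tblock A) (tblock B).
Proof.
move=> tA tB k l k_range l_range.
have relA := twisted_alg_rel tA k_range; have relB := twisted_alg_rel tB l_range.
case: tA tB => [/toeplitzPM_tblock[_ A_PM] A_dvd _] [/toeplitzPM_tblock[_ B_PM] B_dvd _].
have [[x Ak] [y Bl]] := (A_dvd k k_range, B_dvd l l_range).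
have [[xn Akn] [yn Bln]] := (A_PM (k%:Z - n%:Z), B_PM (l%:Z - n%:Z)).
move: relA relB; rewrite Ak Akn Bl Bln -!rmorphM.
move=> /horner_mx_eqP relA /horner_mx_eqP relB; apply/horner_mx_eqP.
have -> : s * x * yn - xn * (s * y) =
          x * (s * yn - t * (s * y)) - y * (s * xn - t * (s * x)) by ring.
by rewrite dvdp_sub ?dvdp_mull.
Qed.

Lemma twisted_alg0 : twisted_alg s t 0.
Proof.
split; last by rewrite mul0mx mulmx0.
  by exists (fun _ => 0); split=> [_|i j]; [apply: inPM0 | rewrite mxE].
have O0 : is_toeplitz (0 : BM) (fun _ => 0) by move=> i j; rewrite mxE.
by move=> k k_range; rewrite (tblock_pos O0 k_range); exists 0; rewrite mulr0 rmorph0.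
Qed.

Lemma twisted_algD A B : twisted_alg s t A -> twisted_alg s t B -> twisted_alg s t (A + B).
Proof.
move=> [AT A_dvd AY] [BT B_dvd BY].
have [[AA A_PM] [BB B_PM]] := (toeplitzPM_tblock AT, toeplitzPM_tblock BT).
have ABab : is_toeplitz (A + B) (fun m => tblock A m + tblock B m).
  by move=> i j; rewrite mxE AA BB.
split; last by rewrite mulmxDl mulmxDr AY BY.
  by exists (fun m => tblock A m + tblock B m); split=> // m; apply: inPMD.
by move=> k k_range; rewrite (tblock_pos ABab k_range); apply: dvdPMD; auto.
Qed.

Lemma twisted_algZ c A : twisted_alg s t A -> twisted_alg s t (bscale c A).
Proof.
move=> [AT A_dvd AY]; have [AA A_PM] := toeplitzPM_tblock AT.
have cAa : is_toeplitz (bscale c A) (fun m => c *: tblock A m).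
  by move=> i j; rewrite mxE AA.
split; last by rewrite bscale_mulmxl bscale_mulmxr AY.
  by exists (fun m => c *: tblock A m); split=> // m; apply: inPMZ.
by move=> k k_range; rewrite (tblock_pos cAa k_range); apply/dvdPMZ/A_dvd.
Qed.

Lemma twisted_algM A B : twisted_alg s t A -> twisted_alg s t B -> twisted_alg s t (A *m B).
Proof.
move=> tA tB; have ABab := twisted_alg_compatible tA tB.
case: tA tB => [AT A_dvd AY] [BT B_dvd BY].
have [[AA A_PM] [BB B_PM]] := (toeplitzPM_tblock AT, toeplitzPM_tblock BT).
have {}ABab := mulmx_toeplitz AA BB ABab.
split; last by rewrite -mulmxA BY !mulmxA AY.
  exists (tconv_symbol n' (tblock A) (tblock B)); split=> // m.
  by rewrite /tconv_symbol /tconv; case: ifP => _; apply: inPM_sum => u _; apply: inPMM.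
move=> k k_range; rewrite (tblock_pos ABab k_range) /tconv_symbol le0z_nat.
apply: dvdPM_sum => u _; rewrite subr0; have [u0 | u_gt0] := posnP u.
  by rewrite u0 subr0; apply: dvdPM_mulr (A_dvd k k_range) (B_PM _).
by apply: dvdPM_mull (A_PM _) (B_dvd u _); rewrite u_gt0 ltn_ord.
Qed.

Lemma twisted_alg_subalgebra : subalgebra (twisted_alg s t).
Proof.
split; [exact: twisted_alg0 | exact: twisted_algD | exact: twisted_algZ | exact: twisted_algM].
Qed.

End TwistedAlgebra.

End BlockToeplitzPM.

Section MaximalSubalgebra.
Variables (C : numClosedFieldType) (d' n' : nat) (M : 'M[C]_d'.+1).
Variable S : 'M['M[C]_d'.+1]_n'.+1 -> Prop.
Hypothesis maxS : maximal_subalgebra M S.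
Hypothesis n'_gt0 : (0 < n')%N.
Local Notation d := d'.+1.
Local Notation n := n'.+1.
Local Notation BM := 'M['M[C]_d]_n.
Local Notation hM := (horner_mx M).
Local Notation p := (mxminpoly M).

Lemma S_toeplitz B : S B -> is_toeplitz B (tblock B) /\ forall m, inPM M (tblock B m).
Proof. by case: maxS => _ S_T _ /S_T/toeplitzPM_tblock. Qed.

Lemma S_compatible A B : S A -> S B -> toeplitz_compatible n' (tblock A) (tblock B).
Proof.
move=> SA SB; have [[_ _ _ S_mul] _ _] := maxS.
have [[AA _] [BB _]] := (S_toeplitz SA, S_toeplitz SB).
by have [ABAB _] := S_toeplitz (S_mul _ _ SA SB); apply: toeplitz_compatible_mulmx AA BB ABAB.
Qed.

Definition pos_block_poly (c : {poly C}) :=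
  exists2 B, S B & exists2 k : nat, (0 < k < n)%N & hM c = tblock B k%:Z.

Definition neg_block_poly (c : {poly C}) :=
  exists2 B, S B & exists2 k : nat, (0 < k < n)%N & hM c = tblock B (k%:Z - n%:Z).

Lemma pos_block_poly_minpoly : pos_block_poly p.
Proof.
exists 0; first by case: maxS => -[].
by exists 1%N; rewrite ?tblock0 ?mx_root_minpoly.
Qed.

Lemma neg_block_poly_minpoly : neg_block_poly p.
Proof.
exists 0; first by case: maxS => -[].
by exists 1%N; rewrite ?tblock0 ?mx_root_minpoly.
Qed.

Lemma S_pos_dvdPM s : (forall c, pos_block_poly c -> s %| c) ->
  forall B, S B -> forall k : nat, (0 < k < n)%N -> dvdPM M s (tblock B k%:Z).
Proof.
move=> s_dvd B SB k k_range; have [r Br] := (S_toeplitz SB).2 k%:Z.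
by rewrite Br; apply/dvdPM_horner/s_dvd; exists B => //; exists k.
Qed.

Lemma S_neg_dvdPM s : (forall c, neg_block_poly c -> s %| c) ->
  forall B, S B -> forall k : nat, (0 < k < n)%N -> dvdPM M s (tblock B (k%:Z - n%:Z)).
Proof.
move=> s_dvd B SB k k_range; have [r Br] := (S_toeplitz SB).2 (k%:Z - n%:Z).
by rewrite Br; apply/dvdPM_horner/s_dvd; exists B => //; exists k.
Qed.

Definition S_twist (c t : {poly C}) := forall B, S B -> forall l : nat, (0 < l < n)%N ->
  hM c * tblock B (l%:Z - n%:Z) = hM t * tblock B l%:Z.

Lemma exists_S_twist sg : (forall c, neg_block_poly c -> sg %| c) ->
  forall c, ideal_span pos_block_poly c -> exists a, S_twist c (sg * a).
Proof.
move=> sg_dvd; apply: ideal_span_min.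
  split.
  - by exists 0 => B _ l _; rewrite mulr0 !rmorph0 !mul0r.
  - move=> x y [a xa] [b yb]; exists (a + b) => B SB l l_range.
    by rewrite mulrDr !rmorphD !mulrDl xa ?yb.
  - move=> q x [a xa]; exists (q * a) => B SB l l_range.
    by rewrite mulrCA !(rmorphM _ q) -!mulrA xa.
move=> c [A SA [k k_range Ac]]; have [r Ar] := (S_toeplitz SA).2 (k%:Z - n%:Z).
exists (r %/ sg) => B SB l l_range.
rewrite divpKC; last by apply: sg_dvd; exists A => //; exists k.
by rewrite Ac S_compatible // Ar.
Qed.

Lemma exists_S_untwist sp t : (forall c, pos_block_poly c -> sp %| c) -> S_twist sp t ->
  forall c, ideal_span neg_block_poly c -> exists x, p %| sp * c - t * sp * x.
Proof.
move=> sp_dvd sp_t; apply: ideal_span_min.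
  split.
  - by exists 0; rewrite !mulr0 subrr dvdp0.
  - move=> c c' [x cx] [x' cx']; exists (x + x').
    have -> : sp * (c + c') - t * sp * (x + x') =
              (sp * c - t * sp * x) + (sp * c' - t * sp * x') by ring.
    exact: dvdp_add.
  - move=> q c [x cx]; exists (q * x).
    have -> : sp * (q * c) - t * sp * (q * x) = q * (sp * c - t * sp * x) by ring.
    exact: dvdp_mull.
move=> c [B SB [k k_range Bc]]; have [x Bk] := S_pos_dvdPM sp_dvd SB k_range.
exists x; apply/horner_mx_eqP.
by rewrite !rmorphM /= Bc sp_t // Bk rmorphM mulrA.
Qed.

Lemma S_twist_addr sp c t u : (forall c, pos_block_poly c -> sp %| c) ->
  p %| u * sp -> S_twist c t -> S_twist c (t + u).
Proof.
move=> sp_dvd p_dvd ct B SB l l_range; rewrite ct // rmorphD mulrDl /=.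
suff -> : hM u * tblock B l%:Z = 0 by rewrite addr0.
have [y ->] := S_pos_dvdPM sp_dvd SB l_range.
by rewrite -rmorphM; apply/mxminpoly_minP; rewrite mulrA dvdp_mulr.
Qed.

Lemma exists_block_gcds : exists sp sg al,
  [/\ sp \is monic, sg \is monic, sp * sg %| p, coprimep al p & S_twist sp (sg * al)] /\
  (forall c, pos_block_poly c -> sp %| c) /\ (forall c, neg_block_poly c -> sg %| c).
Proof.
have p0 : p != 0 := monic_neq0 (mxminpoly_monic M).
have [sp [sp_monic sp_span sp_dvd]] := ideal_span_monic_generator pos_block_poly_minpoly p0.
have [sm [sm_monic sm_span sm_dvd]] := ideal_span_monic_generator neg_block_poly_minpoly p0.
have sp_p := sp_dvd _ pos_block_poly_minpoly.
have [sg [sg_monic sg_sm sg_psp cop_eg]] :=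
  monic_gcdp_coprime_div (p %/ sp) (monic_neq0 sm_monic).
set e := sm %/ sg in cop_eg; set g := p %/ sp %/ sg in cop_eg.
have sg_dvd c : neg_block_poly c -> sg %| c by move/sm_dvd; apply: dvdp_trans.
have [a sp_twist] := exists_S_twist sg_dvd sp_span.
have [x untwist] := exists_S_untwist sp_dvd sp_twist sm_span.
have Ep : p = sp * sg * g by rewrite /g -{1}(divpK sp_p) -{1}(divpK sg_psp); ring.
have spsg0 : sp * sg != 0 by rewrite mulf_neq0 ?monic_neq0.
have g_dvd : g %| e - a * x.
  rewrite -(dvdp_mul2l _ _ spsg0) -Ep; rewrite -(divpK sg_sm) -/e in untwist.
  by rewrite (_ : sp * sg * (e - a * x) = sp * (e * sg) - sg * a * sp * x) //; ring.
have [c al_cop] := exists_coprimep_addr p0 (coprimep_of_dvdp_subr cop_eg g_dvd).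
exists sp, sg, (a + c%:P * g); split=> //; split=> //.
- by rewrite Ep dvdp_mulr.
- rewrite mulrDr; apply: S_twist_addr sp_dvd _ sp_twist.
  have -> : sg * (c%:P * g) * sp = c%:P * p by rewrite Ep; ring.
  exact/dvdp_mull/dvdpp.
Qed.

Lemma offdiag_mx_S sp t : (forall c, pos_block_poly c -> sp %| c) -> S_twist sp t ->
  S (offdiag_mx n' (hM sp) (hM t)).
Proof.
move=> sp_dvd sp_t; have [_ S_T S_max] := maxS.
apply: (S_max (twisted_alg M sp t)) => [|B [] //|B SB|].
- exact: twisted_alg_subalgebra.
- apply: twisted_algP (S_T _ SB) _ _ => k k_range; first exact: S_pos_dvdPM.
  exact: sp_t.
apply: twisted_algP => [|k k_range|k k_range].
- exists (fun m => if 0 < m then hM sp else if m < 0 then hM t else 0).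
  split=> [m|]; last exact: offdiag_mx_toeplitz.
  by case: ifP => _; [|case: ifP => _]; first [apply: inPM_horner | apply: inPM0].
- by rewrite tblock_offdiag_pos //; apply: dvdPM_horner.
- rewrite tblock_offdiag_pos // tblock_offdiag_neg //.
  exact: inPM_comm (inPM_horner M sp) (inPM_horner M t).
Qed.

Section GenericElement.
Variables sp sg al : {poly C}.
Hypotheses (sp_monic : sp \is monic) (sg_monic : sg \is monic).
Hypotheses (spsg_p : sp * sg %| p) (al_p : coprimep al p).
Hypothesis sp_twist : S_twist sp (sg * al).
Hypothesis sp_dvd : forall c, pos_block_poly c -> sp %| c.
Hypothesis sg_dvd : forall c, neg_block_poly c -> sg %| c.
Local Notation A := (offdiag_mx n' (hM sp) (hM (sg * al))).

Lemma pos_block_factor B : S B ->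
  forall j, 1 <= j < n%:Z -> exists bt, tblock B j = hM (sp * bt).
Proof. by move=> SB j /pos_index[k k_range ->]; apply: S_pos_dvdPM. Qed.

Lemma neg_block_factor B : S B ->
  forall j, - n%:Z < j <= -1 -> exists bt, tblock B j = hM (sg * bt).
Proof. by move=> SB j /neg_index[k k_range ->]; apply: S_neg_dvdPM. Qed.

Lemma pos_is_sgcd j : 1 <= j < n%:Z -> is_sgcd M S j sp.
Proof.
have sp_p : sp %| p := dvdp_trans (dvdp_mulIl sp sg) spsg_p.
move=> j_range; split=> // [B b SB Bb | t _ t_dvd].
  by apply: dvdp_of_dvdPM sp_p _; rewrite Bb; apply: pos_block_factor.
apply: (t_dvd A); first exact: offdiag_mx_S.
by have [k k_range ->] := pos_index j_range; rewrite tblock_offdiag_pos.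
Qed.

Lemma neg_is_sgcd j : - n%:Z < j <= -1 -> is_sgcd M S j sg.
Proof.
have sg_p : sg %| p := dvdp_trans (dvdp_mulIr sp sg) spsg_p.
move=> j_range; split=> // [B b SB Bb | t t_p t_dvd].
  by apply: dvdp_of_dvdPM sg_p _; rewrite Bb; apply: neg_block_factor.
have t_al : coprimep t al by apply: coprimep_dvdr t_p _; rewrite coprimep_sym.
rewrite -(Gauss_dvdpl _ t_al).
apply: (t_dvd A); first exact: offdiag_mx_S.
by have [k k_range ->] := neg_index j_range; rewrite tblock_offdiag_neg.
Qed.

Lemma offdiag_mx_pos_neq0 j : generic S -> 1 <= j < n%:Z -> tblock A j != 0.
Proof.
move=> [not_upper _] /pos_index[k k_range ->]; rewrite tblock_offdiag_pos //.
apply/eqP => /mxminpoly_minP p_sp; apply: not_upper => B SB.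
by apply: upperB_of_blocks => l l_range; apply: dvdPM_eq0 p_sp (S_pos_dvdPM sp_dvd SB l_range).
Qed.

Lemma offdiag_mx_neg_neq0 j : generic S -> - n%:Z < j <= -1 -> tblock A j != 0.
Proof.
move=> [_ not_lower] /neg_index[k k_range ->]; rewrite tblock_offdiag_neg //.
apply/eqP => /mxminpoly_minP; rewrite Gauss_dvdpl 1?coprimep_sym // => p_sg.
apply: not_lower => B SB.
by apply: lowerB_of_blocks => l l_range; apply: dvdPM_eq0 p_sg (S_neg_dvdPM sg_dvd SB l_range).
Qed.

End GenericElement.

End MaximalSubalgebra.

Theorem lemma7p2 (C : numClosedFieldType) (n d' : nat) (M : 'M[C]_d'.+1)
  (S : 'M['M[C]_d'.+1]_n -> Prop) :
  (2 <= n)%N -> nonderogatory M -> maximal_subalgebra M S -> generic S ->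
  (* (i) *)
  (forall j : int, 1 <= `|j| < n%:Z -> exists B, S B /\ tblock B j != 0) /\
  (exists splus sminus : {poly C},
    (* (ii) *)
    (forall j : int, 1 <= j < n%:Z -> is_sgcd M S j splus) /\
    (forall j : int, - n%:Z < j <= -1 -> is_sgcd M S j sminus) /\
    (forall B, S B -> forall j : int, 1 <= j < n%:Z ->
       exists bt : {poly C}, tblock B j = horner_mx M (splus * bt)) /\
    (forall B, S B -> forall j : int, - n%:Z < j <= -1 ->
       exists bt : {poly C}, tblock B j = horner_mx M (sminus * bt)) /\
    (* (iii) *)
    (exists A, S A /\
       (forall j : int, 1 <= j < n%:Z ->
          exists ta : {poly C}, tblock A j = horner_mx M (splus * ta)
                                /\ coprimep ta (mxminpoly M)) /\
       (forall j : int, - n%:Z < j <= -1 ->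
          exists ta : {poly C}, tblock A j = horner_mx M (sminus * ta)
                                /\ coprimep ta (mxminpoly M))) /\
    (* (iv) *)
    (splus * sminus %| mxminpoly M)).
Proof.
case: n S => [|n'] // S n_gt1 _ maxS genS.
have [sp [sg [al [[sp_monic sg_monic spsg_p al_p sp_twist] [sp_dvd sg_dvd]]]]] :=
  exists_block_gcds maxS n_gt1.
set A := offdiag_mx n' (horner_mx M sp) (horner_mx M (sg * al)).
have SA : S A := offdiag_mx_S maxS sp_dvd sp_twist.
split.
  move=> j /abs_index[] j_range; exists A; split=> //.
    exact (offdiag_mx_pos_neq0 maxS sg al sp_dvd genS j_range).
  exact (offdiag_mx_neg_neq0 maxS sp al_p sg_dvd genS j_range).
exists sp, sg; split; first exact (pos_is_sgcd maxS sp_monic spsg_p sp_twist sp_dvd).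
split; first exact (neg_is_sgcd maxS sg_monic spsg_p al_p sp_twist sp_dvd sg_dvd).
split; first exact (pos_block_factor maxS sp_dvd).
split; first exact (neg_block_factor maxS sg_dvd).
split; last exact: spsg_p.
exists A; split=> //; split.
  move=> j /pos_index[k k_range ->]; exists 1.
  by rewrite mulr1 tblock_offdiag_pos // coprime1p.
by move=> j /neg_index[k k_range ->]; exists al; rewrite tblock_offdiag_neg.
Qed.
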